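(* Any cycle graph on $n\ge3$ nodes is reachable (observable) from any two adjacent nodes $i$ and $(i\bmod n)+1$.
   Context: The cycle graph on nodes $\{1,\dots,n\}$ has edges $\{i,(i\bmod n)+1\}$; its Laplacian $L$ has $2$ on the diagonal and $-1$ in entries $(i,j)$ with $j\equiv i\pm1\pmod n$. Reachable from a set $\{i_1,i_2\}$ means that $(L,B)$ with $B=[e_{i_1}|e_{i_2}]$ is reachable (reachability matrix has rank $n$); observable means $(L,B^T)$ is observable. *)

From HB Require Import structures.
From mathcomp Require Import all_boot all_order all_algebra.
Set Implicit Arguments. Unset Strict Implicit. Unset Printing Implicit Defensive.
Import Order.TTheory GRing.Theory Num.Theory.
Local Open Scope ring_scope.

(* Nodes {1,...,n} are represented by 'I_n = {0,...,n-1} (node k+1 <-> k).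
   The cycle edge {i, (i mod n)+1} becomes {k, (k+1) mod n}. *)

Definition cycle_laplacian (R : pzRingType) (n : nat) : 'M[R]_n :=
  \matrix_(i < n, j < n)
    if i == j then 2%:R
    else if (val j == (val i).+1 %% n)%N || (val i == (val j).+1 %% n)%N
         then -1 else 0.

Definition input2 (R : pzRingType) (n : nat) (i1 i2 : 'I_n) : 'M[R]_(n, 2) :=
  \matrix_(r < n, c < 2) if c == ord0 then (r == i1)%:R else (r == i2)%:R.

Definition reach_mx (R : pzRingType) (n m : nat) (A : 'M[R]_n) (B : 'M[R]_(n, m)) :=
  \mxrow_(k < n) (A ^+ k *m B).

Definition obs_mx (R : pzRingType) (n p : nat) (A : 'M[R]_n) (C : 'M[R]_(p, n)) :=
  \mxcol_(k < n) (C *m A ^+ k).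

Definition reachable (F : fieldType) (n m : nat) (A : 'M[F]_n) (B : 'M[F]_(n, m)) :=
  \rank (reach_mx A B) = n.

Definition observable (F : fieldType) (n p : nat) (A : 'M[F]_n) (C : 'M[F]_(p, n)) :=
  \rank (obs_mx A C) = n.

From HB Require Import structures.
From mathcomp Require Import all_boot all_order all_algebra.
Set Implicit Arguments.
Unset Strict Implicit.
Unset Printing Implicit Defensive.
Import Order.TTheory GRing.Theory Num.Theory.
Local Open Scope ring_scope.

(* The rows of B^T = [e_i; e_(i+1)] span a subspace of the observable space, and
   the row identity e_k L = 2 e_k - e_(k+1) - e_(k-1) of the Laplacian gives
   e_(k+1) = 2 e_k - e_(k-1) - e_k L. Walking around the cycle from the adjacent
   pair (i, i+1), the unit vector reached after m steps is thus a combination of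
   the rows of B^T L^t with t <= m, so all n unit vectors lie in the row space of
   the observability matrix. Since L is symmetric, reachability of (L, B) is the
   transposed statement. *)

Lemma trmxX (R : comPzRingType) n (A : 'M[R]_n) k : (A ^+ k)^T = A^T ^+ k.
Proof.
elim: k => [|k IH]; first by rewrite !expr0 trmx1.
by rewrite exprS exprSr -!mulmxE trmx_mul IH.
Qed.

Lemma reachableE (F : fieldType) n m (A : 'M[F]_n) (B : 'M[F]_(n, m)) :
  reachable A B = observable A^T B^T.
Proof.
rewrite /reachable /observable -mxrank_tr /reach_mx tr_mxrow.
by congr (\rank _ = n); apply: eq_mxcol => k; rewrite trmx_mul trmxX.
Qed.

Section Krylov.
Variables (F : fieldType) (n p : nat) (A : 'M[F]_n) (C : 'M[F]_(p, n)).

Definition krylov_mx m : 'M[F]_n := (\sum_(t < m.+1) <<C *m A ^+ t>>)%MS.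

Lemma krylov_mxS m : (krylov_mx m <= krylov_mx m.+1)%MS.
Proof.
apply/sumsmx_subP => t _.
exact: (sumsmx_sup (widen_ord (leqnSn _) t)).
Qed.

Lemma sub_krylov_mx0 : (C <= krylov_mx 0)%MS.
Proof. by apply: (sumsmx_sup ord0) => //; rewrite genmxE expr0 mulmx1. Qed.

Lemma krylov_mx_mul m (v : 'rV[F]_n) :
  (v <= krylov_mx m)%MS -> (v *m A <= krylov_mx m.+1)%MS.
Proof.
move/sub_sums_genmxP=> [u ->]; rewrite mulmx_suml.
apply: summx_sub => t _; rewrite -!mulmxA.
have -> : A ^+ t *m A = A ^+ t.+1 by rewrite exprSr mulmxE.
apply: (sumsmx_sup (lift ord0 t)) => //.
by rewrite genmxE; apply: submxMl.
Qed.

Lemma krylov_mx_sub_obs m : (m < n)%N -> (krylov_mx m <= obs_mx A C)%MS.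
Proof.
move=> lt_mn; apply/sumsmx_subP => t _; rewrite genmxE /obs_mx eqmx_col.
have lt_tn : (t < n)%N := leq_trans (ltn_ord t) lt_mn.
by apply: (sumsmx_sup (Ordinal lt_tn)) => //; rewrite genmxE.
Qed.

Lemma observable_unit_rows :
  (forall k : 'I_n, (delta_mx 0 k : 'rV_n) <= obs_mx A C)%MS -> observable A C.
Proof.
move=> sub_e; apply/eqP; rewrite eqn_leq rank_leq_col -{1}(mxrank1 F n).
by apply/mxrankS/row_subP => k; rewrite row1.
Qed.

End Krylov.

Section CycleOrdinals.
Variable n : nat.

Lemma val_iter_ordS (k : 'I_n) m : val (iter m (@ordS n) k) = ((k + m) %% n)%N.
Proof.
elim: m => [|m IH] /=; first by rewrite addn0 modn_small.
by rewrite IH -addn1 modnDml addn1 addnS.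
Qed.

Lemma iter_ordS_eq (k : 'I_n) m : (iter m (@ordS n) k == k) = (n %| m)%N.
Proof.
rewrite -val_eqE val_iter_ordS /=.
rewrite -[X in _ == X](modn_small (ltn_ord k)) -[X in _ == (X %% n)%N]addn0.
by rewrite eqn_modDl mod0n.
Qed.

Lemma iter_ordS_onto (i k : 'I_n) : exists2 m, (m < n)%N & iter m (@ordS n) i = k.
Proof.
exists ((k + (n - i)) %% n)%N.
  by rewrite ltn_mod (leq_ltn_trans (leq0n k) (ltn_ord k)).
apply: val_inj; rewrite val_iter_ordS modnDmr addnCA subnKC ?(ltnW (ltn_ord i)) //.
by rewrite modnDr modn_small.
Qed.

End CycleOrdinals.

Lemma row_cycle_laplacian (R : pzRingType) n (k : 'I_n) : (3 <= n)%N ->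
  row k (cycle_laplacian R n) =
  2%:R *: delta_mx 0 k - delta_mx 0 (ordS k) - delta_mx 0 (ord_pred k).
Proof.
move=> n_ge3.
have Sk_k : ordS k != k by rewrite (iter_ordS_eq k 1%N) dvdn1 gtn_eqF // ltnW.
have Pk_k : ord_pred k != k.
  by apply: contra Sk_k => /eqP Pk; rewrite -{1}Pk ord_predK.
have Sk_Pk : ordS k != ord_pred k.
  apply/eqP => Sk; have := iter_ordS_eq k 2%N.
  rewrite /= Sk ord_predK eqxx => /esym/dvdn_leq le_n2.
  by move: n_ge3; rewrite ltnNge le_n2.
apply/rowP => c; rewrite !mxE.
have Sk_c : (val c == (val k).+1 %% n)%N = (c == ordS k) by [].
have Pk_c : (val k == (val c).+1 %% n)%N = (c == ord_pred k).
  apply/eqP/eqP => [kSc | ->]; last by have /(congr1 val) := ord_predK k.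
  by rewrite -(ordSK c); congr ord_pred; apply: val_inj.
rewrite Sk_c Pk_c.
have [-> | ck] := eqVneq c k.
  by rewrite eqxx !(eq_sym k) (negPf Sk_k) (negPf Pk_k) mulr1 !subr0.
rewrite mulr0 sub0r.
have [-> | _] := eqVneq c (ordS k); first by rewrite (negPf Sk_Pk) subr0.
by case: (c == ord_pred k); rewrite /= oppr0 ?sub0r ?addr0.
Qed.

Section CycleObservability.
Variables (F : fieldType) (n : nat) (i j : 'I_n).
Hypotheses (n_ge3 : (3 <= n)%N) (ij_adjacent : val j = ((val i).+1 %% n)%N).

Let L := cycle_laplacian F n.
Let C := (input2 F i j)^T.
Let e (k : 'I_n) : 'rV[F]_n := delta_mx 0 k.
Let walk m := iter m (@ordS n) i.

Lemma walk_sub_krylov m :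
  (e (walk m) <= krylov_mx L C m)%MS /\ (e (walk m.+1) <= krylov_mx L C m)%MS.
Proof.
elim: m => [|m [IHm IHSm]].
  have walk1 : walk 1 = j by apply: val_inj; rewrite /= ij_adjacent.
  rewrite walk1; split; apply: submx_trans (sub_krylov_mx0 L C).
    have -> : e (walk 0) = row 0 C by apply/rowP => c; rewrite !mxE eq_sym.
    exact: row_sub.
  have -> : e j = row 1 C by apply/rowP => c; rewrite !mxE eq_sym.
  exact: row_sub.
split; first exact: submx_trans IHSm (krylov_mxS _ _ _).
have walk_rec :
    e (walk m.+2) = 2%:R *: e (walk m.+1) - e (walk m) - e (walk m.+1) *m L.
  rewrite -rowE row_cycle_laplacian // /= ordSK.
  by rewrite opprB -addrA addKr opprB addrC subrK.
rewrite walk_rec; apply: addmx_sub; last by rewrite eqmx_opp krylov_mx_mul.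
apply: addmx_sub; last by rewrite eqmx_opp (submx_trans IHm) ?krylov_mxS.
by rewrite scalemx_sub // (submx_trans IHSm) ?krylov_mxS.
Qed.

Lemma cycle_observable : observable L C.
Proof.
apply: observable_unit_rows => k.
have [m lt_mn <-] := iter_ordS_onto i k.
by have [sub_e _] := walk_sub_krylov m; rewrite (submx_trans sub_e) ?krylov_mx_sub_obs.
Qed.

End CycleObservability.

Lemma cycle_laplacian_tr (R : pzRingType) n :
  (cycle_laplacian R n)^T = cycle_laplacian R n.
Proof. by apply/matrixP => a b; rewrite !mxE (eq_sym b a) orbC. Qed.

Theorem mainTheorem10 (R : realFieldType) (n : nat) (hn : (3 <= n)%N)
    (i j : 'I_n) (hij : val j = ((val i).+1 %% n)%N) :
  reachable (cycle_laplacian R n) (input2 R i j) /\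
  observable (cycle_laplacian R n) (input2 R i j)^T.
Proof.
have obs := cycle_observable R hn hij.
by split; rewrite // reachableE cycle_laplacian_tr.
Qed.
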